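(* Let $p\in(0,1/16)$. Then for any $m,n\in\mathbb N$ the set $$\Delta_{mn}(p)=\{q\in(0,1/16):\ S_1^m(A_{pq})\cap S_2^n(A_{pq})\neq\varnothing\}$$ is closed and nowhere dense in $(0,1/16)$.
   Context: For $p,q\in(0,1/2)$ let $S_1(x)=px$, $S_2(x)=qx$, $S_3(x)=px+1-p$, $S_4(x)=qx+1-q$, let $K_{pq}$ be the attractor of $\{S_1,S_2,S_3,S_4\}$ (the unique nonempty compact $K\subset\mathbb R$ with $K=\bigcup_{i=1}^4S_i(K)$), and let $A_{pq}=S_3(K_{pq})\cup S_4(K_{pq})$. In the definition of $\Delta_{mn}(p)$ the maps $S_2,S_3,S_4$ and the set $A_{pq}$ are those corresponding to the parameters $p,q$. *)

From HB Require Import structures.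
From mathcomp Require Import all_boot all_order all_algebra.
From mathcomp Require Import all_classical all_reals topology normedtype.
Set Implicit Arguments. Unset Strict Implicit. Unset Printing Implicit Defensive.
Import Order.TTheory GRing.Theory Num.Theory numFieldTopology.Exports numFieldNormedType.Exports.
Local Open Scope classical_set_scope.
Local Open Scope ring_scope.

Section IFS.
Variable R : realType.

Definition S1 (p q : R) (x : R) : R := p * x.
Definition S2 (p q : R) (x : R) : R := q * x.
Definition S3 (p q : R) (x : R) : R := p * x + 1 - p.
Definition S4 (p q : R) (x : R) : R := q * x + 1 - q.

Definition is_attractor (p q : R) (K : set R) : Prop :=
  K !=set0 /\ compact K /\
  K = (S1 p q @` K) `|` (S2 p q @` K) `|` (S3 p q @` K) `|` (S4 p q @` K).

Definition Kpq (p q : R) : set R := xget set0 (is_attractor p q).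

Definition Apq (p q : R) : set R := (S3 p q @` Kpq p q) `|` (S4 p q @` Kpq p q).

Definition Delta (m n : nat) (p : R) : set R :=
  [set q | 0 < q < 1/16 /\
     ((iter m (S1 p q)) @` Apq p q) `&` ((iter n (S2 p q)) @` Apq p q) !=set0].

End IFS.

From HB Require Import structures.
From mathcomp Require Import all_boot all_order all_algebra.
From mathcomp Require Import all_classical all_reals topology normedtype.
From mathcomp Require Import sequences ring lra.
Set Implicit Arguments. Unset Strict Implicit. Unset Printing Implicit Defensive.
Import Order.TTheory GRing.Theory Num.Theory numFieldTopology.Exports numFieldNormedType.Exports.
Local Open Scope classical_set_scope.
Local Open Scope ring_scope.

(* The attractor K_pq lies in [0,1], so A_pq lies in [15/16,1], and q is in
   Delta_mn(p) iff p^m a = q^n b for some a, b in A_pq.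

   Closedness: a point of K_pq coded by a word w of length k moves by at most
   16^-k + 2|q - q'| when q is replaced by q' and the same word is used, so
   solutions for q close to q0 give almost-solutions for q0, and a limit
   argument in the compact set A_q0 x A_q0 produces a solution.

   Nowhere density: coding a and b by words w1, w2 of length k+1 puts every
   q of Delta_mn(p) within [u,v] into a cylinder on which the gap
   q^n S_w2(0) - p^m S_w1(0) is at most p^m r(w1) + v^n r(w2) in absolute
   value, r(w) being the contraction ratio of S_w at parameter v.  Because w2
   starts with S3 or S4, this gap increases with q at rate at least p^m, so
   the cylinder is an interval of length at most twice that bound over p^m.
   Summing over the 16^(k+1) pairs of words gives a total length
   C (8p + 8v)^(k+1), which tends to 0; hence Delta_mn(p) contains no
   interval. *)

Lemma exists_expr_lt (R : realType) (c e : R) : 0 <= c < 1 -> 0 < e ->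
  exists k, c ^+ k < e.
Proof.
move=> /andP[c0 c1] e0.
have /cvg_expr/cvgrPdist_lt/(_ e e0)[N _ cN] : `|c| < 1 by rewrite ger0_norm.
by exists N; have := cN N (leqnn N); rewrite sub0r normrN ger0_norm // exprn_ge0.
Qed.

Lemma le0_geometric_bound (R : realType) (c C x : R) : 0 <= c < 1 ->
  (forall k, x <= C * c ^+ k.+1) -> x <= 0.
Proof.
move=> c01 xC; have /andP[c0 c1] := c01; rewrite leNgt; apply/negP => x0.
have C0 : 0 < C by have := xC 0%N; rewrite expr1; nra.
have [k ck] := exists_expr_lt c01 (divr_gt0 x0 C0).
have := xC k; have : c ^+ k.+1 <= c ^+ k by apply: ler_wiXn2l => //; exact: ltW.
by move: ck; rewrite ltr_pdivlMr // => *; nra.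
Qed.

Lemma exprn_dist (R : realDomainType) (a b : R) k : 0 <= a <= 1 -> 0 <= b <= 1 ->
  `|a ^+ k - b ^+ k| <= k%:R * `|a - b|.
Proof.
move=> /andP[a0 a1] /andP[b0 b1]; elim: k => [|k IH].
  by rewrite !expr0 subrr normr0 mul0r.
have -> : a ^+ k.+1 - b ^+ k.+1 = a * (a ^+ k - b ^+ k) + b ^+ k * (a - b).
  by rewrite !exprS; ring.
apply: le_trans (ler_normD _ _) _.
rewrite !normrM (ger0_norm a0) (ger0_norm (exprn_ge0 k b0)) -nat1r mulrDl mul1r.
have := exprn_ile1 k b0 b1; have := exprn_ge0 k b0.
have := normr_ge0 (a ^+ k - b ^+ k); have := normr_ge0 (a - b).
move=> *; nra.
Qed.

Lemma subrXX_ge (R : realDomainType) (a b : R) k : 0 <= a -> a <= b ->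
  (b - a) * a ^+ k <= b ^+ k.+1 - a ^+ k.+1.
Proof.
move=> a0 ab; have : a ^+ k <= b ^+ k by rewrite lerXn2r // nnegrE (le_trans a0).
have := exprn_ge0 k a0; rewrite !exprS; nra.
Qed.

Lemma le_sum_diam_cover (R : realFieldType) (I : eqType) (E : I -> set R)
    (diam : I -> R) (s : seq I) (u v : R) :
  (forall i, 0 <= diam i) -> (forall i x y, E i x -> E i y -> `|x - y| <= diam i) ->
  u <= v -> (forall x, u <= x <= v -> exists2 i, i \in s & E i x) ->
  v - u <= \sum_(i <- s) diam i.
Proof.
move=> diam0 diamE; move: {2}(size s) (leqnn (size s)) => N.
elim: N s u => [|N IH] s u sN uv cover; have uuv : u <= u <= v by rewrite lexx uv.
  by have [i] := cover u uuv; move: sN; rewrite leqn0 => /nilP ->.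
have [j js Eu] := cover u uuv; rewrite (big_rem j js) /=.
have sum0 : 0 <= \sum_(i <- rem j s) diam i by apply: sumr_ge0 => i _.
suff : v - (u + diam j) <= \sum_(i <- rem j s) diam i by lra.
apply/ler_addgt0Pr => e e0.
have [ve|ev] := ltP v (u + diam j + e); first lra.
suff : v - (u + diam j + e) <= \sum_(i <- rem j s) diam i by lra.
apply: IH ev _ => [|x /andP[ux xv]]; first by rewrite size_rem //; case: (size s) sN.
have [i si Ex] : exists2 i, i \in s & E i x.
  by apply: cover; apply/andP; split; have := diam0 j; lra.
exists i => //; apply: rem_mem => //; apply/eqP => ij; rewrite ij in Ex.
by have := diamE j x u Ex Eu; have dj := diam0 j; rewrite ger0_norm; lra.
Qed.

Lemma sum_allpairs_mul (R : comPzSemiRingType) (I : Type) (s : seq I) (F G : I -> R) :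
  \sum_(i <- [seq (x, y) | x <- s, y <- s]) F i.1 * G i.2 =
  (\sum_(x <- s) F x) * \sum_(y <- s) G y.
Proof. by rewrite big_allpairs big_distrl; apply: eq_bigr => x _; rewrite big_distrr. Qed.

Definition digits : seq nat := [:: 0; 1; 2; 3]%N.

Fixpoint words (k : nat) : seq (seq nat) :=
  if k is k'.+1 then [seq d :: w | d <- digits, w <- words k'] else [:: [::]].

Lemma mem_digits d : (d \in digits) = (d < 4)%N.
Proof. by case: d => [|[|[|[|d]]]]. Qed.

Lemma words_cons k d w : (d < 4)%N -> w \in words k -> d :: w \in words k.+1.
Proof. by rewrite -mem_digits => d4 wk; apply/allpairsP; exists (d, w). Qed.

Lemma size_words k w : w \in words k -> size w = k.
Proof.
elim: k w => [|k IH] w; first by rewrite inE => /eqP ->.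
by case/allpairsP => -[d w'] [_ /IH <- ->].
Qed.

Lemma sum_prod_words (R : comPzSemiRingType) (f : nat -> R) k :
  \sum_(w <- words k) \prod_(d <- w) f d = (\sum_(d <- digits) f d) ^+ k.
Proof.
elim: k => [|k IH]; first by rewrite big_seq1 big_nil expr0.
rewrite exprSr -IH -[words k.+1]/[seq d :: w | d <- digits, w <- words k].
rewrite big_allpairs_dep [in RHS]mulrC big_distrl /=.
apply: eq_bigr => d _; rewrite big_distrr /=.
by apply: eq_bigr => w _; rewrite big_cons.
Qed.

Lemma sum1_words (R : comNzRingType) k : \sum_(w <- words k) (1 : R) = 4 ^+ k.
Proof.
rewrite (eq_bigr (fun w => \prod_(d <- w) (1 : R))) => [|w _]; last by rewrite big1_eq.
by rewrite sum_prod_words /digits !big_cons big_nil; congr (_ ^+ _); ring.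
Qed.

Section DigitMaps.
Variable R : realType.
Implicit Types (p q x y z : R) (d : nat) (w : seq nat).

(* Digit [d] stands for the map [S_(d+1)]. *)
Definition digit_ratio p q d : R := if odd d then q else p.
Definition digit_shift p q d : R := if (d < 2)%N then 0 else 1 - digit_ratio p q d.
Definition digit_map p q d x : R := digit_ratio p q d * x + digit_shift p q d.
Definition word_map p q w x : R := foldr (digit_map p q) x w.
Definition word_ratio p q w : R := \prod_(d <- w) digit_ratio p q d.

Lemma S_digit_map p q : [/\ S1 p q = digit_map p q 0, S2 p q = digit_map p q 1,
  S3 p q = digit_map p q 2 & S4 p q = digit_map p q 3].
Proof.
split; apply: funext => y;
  by rewrite /digit_map /digit_shift /digit_ratio /S1 /S2 /S3 /S4 /=; ring.
Qed.

Lemma iter_S1 p q k x : iter k (S1 p q) x = p ^+ k * x.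
Proof. by elim: k => [|k IH] /=; rewrite ?expr0 ?mul1r // IH /S1 exprS mulrA. Qed.

Lemma iter_S2 p q k x : iter k (S2 p q) x = q ^+ k * x.
Proof. by elim: k => [|k IH] /=; rewrite ?expr0 ?mul1r // IH /S2 exprS mulrA. Qed.

Lemma digit_mapB p q d x y :
  digit_map p q d x - digit_map p q d y = digit_ratio p q d * (x - y).
Proof. by rewrite /digit_map; ring. Qed.

Lemma word_mapB p q w x y :
  word_map p q w x - word_map p q w y = word_ratio p q w * (x - y).
Proof.
elim: w => [|d w IH]; first by rewrite /word_ratio big_nil mul1r.
by rewrite /= digit_mapB IH /word_ratio big_cons mulrA.
Qed.

Lemma digit_map_continuous p q d : continuous (digit_map p q d).
Proof.
move=> x; apply: continuousD; last exact: cst_continuous.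
apply: (@continuousM _ _ (fun=> digit_ratio p q d) id); first exact: cst_continuous.
exact: cvg_id.
Qed.

Lemma sum_word_ratio p v k :
  \sum_(w <- words k) word_ratio p v w = (2 * p + 2 * v) ^+ k.
Proof.
by rewrite sum_prod_words /digits !big_cons big_nil /digit_ratio /=; congr (_ ^+ _); ring.
Qed.

Lemma sum_allpairs_word_ratio p v a b k :
  \sum_(i <- [seq (w1, w2) | w1 <- words k, w2 <- words k])
    (a * word_ratio p v i.1 + b * word_ratio p v i.2) = (a + b) * (8 * p + 8 * v) ^+ k.
Proof.
under eq_bigr do rewrite -[a * _]mulr1 -[b * _]mul1r.
rewrite big_split /= (sum_allpairs_mul _ (fun w => a * word_ratio p v w) (fun=> 1)).
rewrite (sum_allpairs_mul _ (fun=> 1) (fun w => b * word_ratio p v w)).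
rewrite -!big_distrr /= sum1_words sum_word_ratio.
have -> : 8 * p + 8 * v = 4 * (2 * p + 2 * v) by ring.
by rewrite exprMn; ring.
Qed.

Section Contraction.
Variables p q : R.
Hypotheses (hp : 0 < p < 1/16) (hq : 0 < q < 1/16).

Lemma bounds01 : 0 <= q <= 1.
Proof. by case/andP: hq => q0 q16; apply/andP; split; lra. Qed.

Lemma exprn_bounds k : 0 <= q ^+ k <= 1.
Proof. by case/andP: bounds01 => q0 q1; rewrite exprn_ge0 // exprn_ile1. Qed.

Lemma digit_ratio_bounds d : 0 < digit_ratio p q d < 1/16.
Proof. by rewrite /digit_ratio; case: odd. Qed.

Lemma digit_map01 d x : 0 <= x <= 1 -> 0 <= digit_map p q d x <= 1.
Proof.
move=> /andP[x0 x1]; have /andP[r0 r1] := digit_ratio_bounds d.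
by rewrite /digit_map /digit_shift; case: ifP => _; apply/andP; split; nra.
Qed.

Lemma digit_map_ge d x : (1 < d)%N -> 0 <= x -> 15/16 <= digit_map p q d x.
Proof.
move=> d1 x0; have /andP[r0 r1] := digit_ratio_bounds d.
rewrite /digit_map /digit_shift ltnNge d1 /=; nra.
Qed.

Lemma digit_map_center d x : `|digit_map p q d x - 1/2| <=
  digit_ratio p q d * `|x - 1/2| + (1 - digit_ratio p q d) / 2.
Proof.
have /andP[r0 r1] := digit_ratio_bounds d.
have -> : digit_map p q d x - 1/2 = digit_ratio p q d * (x - 1/2) +
    (digit_shift p q d - (1 - digit_ratio p q d) / 2) by rewrite /digit_map; ring.
apply: le_trans (ler_normD _ _) _; rewrite normrM gtr0_norm // lerD2l.
by rewrite /digit_shift; case: ifP => _; rewrite ler_norml; apply/andP; split; lra.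
Qed.

Lemma word_map01 w x : 0 <= x <= 1 -> 0 <= word_map p q w x <= 1.
Proof. by move=> x01; elim: w => [|d w IH] //=; apply: digit_map01. Qed.

Lemma word_map_head_ge w : (1 < head 0%N w)%N -> 15/16 <= word_map p q w 0.
Proof.
case: w => [|d w] //= d1; apply: digit_map_ge => //.
have x01 : 0 <= (0 : R) <= 1 by rewrite lexx ler01.
by case/andP: (word_map01 w x01).
Qed.

Lemma word_ratio_bounds w : 0 <= word_ratio p q w <= (1/16) ^+ size w.
Proof.
rewrite /word_ratio; elim: w => [|d w /andP[r0 r1]].
  by rewrite big_nil lexx ler01.
have /andP[s0 s1] := digit_ratio_bounds d.
by rewrite big_cons exprS mulr_ge0 ?ler_pM // ltW.
Qed.

Lemma word_map_sub0 w z : 0 <= z <= 1 ->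
  0 <= word_map p q w z - word_map p q w 0 <= word_ratio p q w.
Proof.
move=> /andP[z0 z1]; rewrite word_mapB subr0.
have /andP[r0 _] := word_ratio_bounds w.
by rewrite mulr_ge0 //= ler_piMr.
Qed.

End Contraction.

Section ParameterDependence.
Variables p q1 q2 : R.
Hypotheses (hp : 0 < p < 1/16) (hq1 : 0 < q1 < 1/16) (hq2 : 0 < q2 < 1/16).

Lemma digit_map_dist d x : 0 <= x <= 1 ->
  `|digit_map p q1 d x - digit_map p q2 d x| <= `|q1 - q2|.
Proof.
move=> /andP[x0 x1]; rewrite /digit_map /digit_shift /digit_ratio.
case: odd; case: ifP => _; rewrite ?subrr ?normr0 //.
- have -> : q1 * x + 0 - (q2 * x + 0) = (q1 - q2) * x by ring.
  by rewrite normrM (ger0_norm x0) ler_piMr.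
- have -> : q1 * x + (1 - q1) - (q2 * x + (1 - q2)) = (q1 - q2) * (x - 1) by ring.
  by rewrite normrM ler_piMr // ler_norml; apply/andP; split; lra.
Qed.

Lemma word_map_dist w x : 0 <= x <= 1 ->
  `|word_map p q1 w x - word_map p q2 w x| <= 2 * `|q1 - q2|.
Proof.
move=> x01; elim: w => [|d w IH] /=; first by rewrite subrr normr0 mulr_ge0.
set y1 := word_map p q1 w x; set y2 := word_map p q2 w x.
have -> : digit_map p q1 d y1 - digit_map p q2 d y2 =
    (digit_map p q1 d y1 - digit_map p q1 d y2) +
    (digit_map p q1 d y2 - digit_map p q2 d y2) by ring.
apply: le_trans (ler_normD _ _) _.
rewrite digit_mapB normrM.
have /andP[r0 r1] := digit_ratio_bounds hp hq1 d.
have := digit_map_dist d (word_map01 hp hq2 w x01).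
have := normr_ge0 (y1 - y2).
rewrite gtr0_norm // => *; nra.
Qed.

Lemma word_map_approx w z1 z2 : 0 <= z1 <= 1 -> 0 <= z2 <= 1 ->
  `|word_map p q1 w z1 - word_map p q2 w z2| <= (1/16) ^+ size w + 2 * `|q1 - q2|.
Proof.
move=> /andP[z10 z11] /andP[z20 z21].
have -> : word_map p q1 w z1 - word_map p q2 w z2 =
    (word_map p q1 w z1 - word_map p q1 w z2) +
    (word_map p q1 w z2 - word_map p q2 w z2) by ring.
apply: le_trans (ler_normD _ _) _; apply: lerD; last first.
  by apply: word_map_dist; rewrite z20 z21.
have /andP[r0 r1] := word_ratio_bounds hp hq1 w.
rewrite word_mapB normrM ger0_norm //; apply: le_trans r1.
by rewrite ler_piMr // ler_norml; apply/andP; split; lra.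
Qed.

Lemma word_ratio_le w : q1 <= q2 -> word_ratio p q1 w <= word_ratio p q2 w.
Proof.
move=> q12; rewrite /word_ratio; elim: w => [|d w IH]; rewrite ?big_nil ?big_cons //.
have /andP[r0 _] := digit_ratio_bounds hp hq1 d.
have /andP[s0 _] := word_ratio_bounds hp hq1 w.
by apply: ler_pM => //; [exact: ltW | rewrite /digit_ratio; case: odd].
Qed.

End ParameterDependence.
End DigitMaps.
Section Attractor.
Variables (R : realType) (p q : R).
Hypotheses (hp : 0 < p < 1/16) (hq : 0 < q < 1/16).
Implicit Types (A B K : set R) (x y z : R).

Definition hutchinson A : set R :=
  (S1 p q @` A) `|` (S2 p q @` A) `|` (S3 p q @` A) `|` (S4 p q @` A).

Lemma hutchinsonP A x :
  hutchinson A x <-> exists2 d, (d < 4)%N & (digit_map p q d @` A) x.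
Proof.
rewrite /hutchinson; case: (@S_digit_map R p q) => -> -> -> ->; split.
  by case=> [[[]|]|] ?; [exists 0%N|exists 1%N|exists 2%N|exists 3%N].
by case=> -[|[|[|[|d]]]] // _ ?; [left; left; left|left; left; right|left; right|right].
Qed.

Lemma hutchinsonS A B : A `<=` B -> hutchinson A `<=` hutchinson B.
Proof.
move=> AB x /hutchinsonP[d d4 [y Ay <-]].
by apply/hutchinsonP; exists d => //; exists y => //; apply: AB.
Qed.

Lemma hutchinson_compact A : compact A -> compact (hutchinson A).
Proof.
move=> cA; have cS d : compact (digit_map p q d @` A).
  apply: continuous_compact => //; apply: continuous_subspaceT.
  exact: digit_map_continuous.
by rewrite /hutchinson; case: (@S_digit_map R p q) => -> -> -> ->; do !apply: compactU.
Qed.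

Lemma is_attractor_fixed K : is_attractor p q K -> K = hutchinson K.
Proof. by case=> _ []. Qed.

Definition approximant k : set R := iter k hutchinson [set x | 0 <= x <= 1].

Lemma approximant_compact k : compact (approximant k).
Proof.
elim: k => [|k IH]; last exact: hutchinson_compact.
rewrite (_ : approximant 0 = `[0, 1]%classic); first exact: segment_compact.
by apply/seteqP; split => x /=; rewrite in_itv.
Qed.

Lemma approximant0 k : approximant k 0.
Proof.
elim: k => [|k IH] /=; first by rewrite lexx ler01.
apply/hutchinsonP; exists 0%N => //; exists 0 => //.
by rewrite /digit_map /digit_shift /= mulr0 addr0.
Qed.

Lemma approximant_decr j k : (j <= k)%N -> approximant k `<=` approximant j.
Proof.
have step i : approximant i.+1 `<=` approximant i.
  elim: i => [|i IH]; last exact: hutchinsonS.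
  by move=> x /hutchinsonP[d _ [y y01 <-]]; apply: digit_map01.
move=> /subnK <-; elim: (k - j)%N => [|i IH] //.
by rewrite addSn; apply: subset_trans IH; apply: step.
Qed.

Lemma bigcap_approximant_sub :
  \bigcap_k approximant k `<=` hutchinson (\bigcap_k approximant k).
Proof.
move=> x Kx; apply/hutchinsonP.
have r_neq0 d : digit_ratio p q d != 0.
  by case/andP: (digit_ratio_bounds hp hq d) => r0 _; rewrite gt_eqF.
pose y d := (x - digit_shift p q d) / digit_ratio p q d.
have yK d : digit_map p q d (y d) = x by rewrite /digit_map mulrC divfK ?subrK.
have yE d z : digit_map p q d z = x -> y d = z.
  by rewrite /y => <-; rewrite /digit_map addrK mulrC mulKf.
(* If each of the four preimages [y d] of [x] escaped some approximant, [x]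
   would not lie in the approximant beyond all four escape levels. *)
apply: contrapT => noK.
have /choice[k_ hk_] (d : 'I_4) : exists k, ~ approximant k (y d).
  apply/existsNP => yA; apply: noK; exists (val d); first exact: ltn_ord.
  by exists (y d); [move=> k _; apply: yA | exact: yK].
have /hutchinsonP[d d4 [z zA /yE yz]] := Kx (\max_(d < 4) k_ d).+1 I.
apply: (hk_ (Ordinal d4)); rewrite /= yz.
by apply: approximant_decr zA; apply: (leq_bigmax (Ordinal d4)).
Qed.

Lemma attractor_exists : exists K, is_attractor p q K.
Proof.
pose K := \bigcap_k approximant k.
have clK : closed K.
  apply: closed_bigI => k _; apply: compact_closed; first exact: Rhausdorff.
  exact: approximant_compact.
exists K; split; first by exists 0 => k _; apply: approximant0.
split; first by apply: (subclosed_compact clK (@approximant_compact 0)) => x /(_ 0%N I).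
apply/seteqP; split; first exact: bigcap_approximant_sub.
move=> x Kx k _; apply: (approximant_decr (leqnSn k)).
by apply: hutchinsonS Kx => y /(_ k I).
Qed.

Lemma Kpq_attractor : is_attractor p q (Kpq p q).
Proof. exact: xgetPex attractor_exists. Qed.

(* Each digit map sends [|x - 1/2| <= s] into [|x - 1/2| <= r s + (1 - r)/2]
   with [r < 1/16], so the radius [sup |x - 1/2|] of [K] cannot exceed [1/2]. *)
Lemma attractor_sub01 K : is_attractor p q K -> K `<=` [set x | 0 <= x <= 1].
Proof.
move=> hK; have [[x0 Kx0] [cK _]] := hK.
pose D := [set `|x - 1/2| | x in K].
have D0 : D !=set0 by exists `|x0 - 1/2|, x0.
have supD : has_sup D.
  split => //; have [M [_ KM]] := compact_bounded cK.
  exists (M + 2) => _ [x Kx <-]; have : `|x| <= M + 1 by apply: KM Kx; rewrite ltrDl.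
  by rewrite !ler_norml => /andP[? ?]; apply/andP; split; lra.
have sD : sup D <= 1/2.
  rewrite leNgt; apply/negP => sD.
  suff : sup D <= sup D - 15/16 * (sup D - 1/2) by lra.
  apply: ge_sup => // _ [x Kx <-]; rewrite (is_attractor_fixed hK) in Kx.
  have /hutchinsonP[d _ [y Ky <-]] := Kx.
  have yD : `|y - 1/2| <= sup D by apply: sup_upper_bound => //; exists y.
  have /andP[r0 r1] := digit_ratio_bounds hp hq d.
  apply: le_trans (digit_map_center hp hq d y) _; nra.
move=> x Kx; have : `|x - 1/2| <= 1/2.
  by apply: le_trans sD; apply: sup_upper_bound => //; exists x.
by rewrite ler_norml => /andP[? ?]; apply/andP; split; lra.
Qed.

Lemma Kpq_sub01 x : Kpq p q x -> 0 <= x <= 1.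
Proof. exact: attractor_sub01 Kpq_attractor x. Qed.

Lemma attractor_coding K k x : is_attractor p q K -> K x ->
  exists w z, [/\ w \in words k, K z & x = word_map p q w z].
Proof.
move=> hK; elim: k x => [|k IH] x Kx; first by exists [::], x; rewrite inE.
rewrite (is_attractor_fixed hK) in Kx; have /hutchinsonP[d d4 [y Ky <-]] := Kx.
have [w [z [wk Kz ->]]] := IH y Ky.
by exists (d :: w), z; split => //; apply: words_cons.
Qed.

Lemma attractor_word_map K k w z : is_attractor p q K -> w \in words k -> K z ->
  K (word_map p q w z).
Proof.
move=> hK; elim: k w => [|k IH] w; first by rewrite inE => /eqP ->.
case/allpairsP => -[d w'] [/= d4 w'k ->] Kz.
rewrite (is_attractor_fixed hK); apply/hutchinsonP; exists d; first by rewrite -mem_digits.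
by exists (word_map p q w' z) => //; apply: IH.
Qed.

Lemma Apq_word k w z : w \in words k.+1 -> (1 < head 0%N w)%N -> Kpq p q z ->
  Apq p q (word_map p q w z).
Proof.
case/allpairsP => -[d w'] [/= d4 w'k ->] /= d1 Kz.
have Kw := attractor_word_map Kpq_attractor w'k Kz.
rewrite /Apq; case: (@S_digit_map R p q) => _ _ -> ->.
move: d4 d1; rewrite mem_digits; case: d => [|[|[|[|d]]]] // _ _.
  by left; exists (word_map p q w' z).
by right; exists (word_map p q w' z).
Qed.

Lemma Apq_coding k a : Apq p q a -> exists w z,
  [/\ w \in words k.+1, (1 < head 0%N w)%N, Kpq p q z & a = word_map p q w z].
Proof.
rewrite /Apq; case: (@S_digit_map R p q) => _ _ -> -> Aa.
have [d /andP[d1 d4] [y Ky <-]] :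
    exists2 d, (1 < d < 4)%N & (digit_map p q d @` Kpq p q) a.
  by case: Aa => ?; [exists 2%N | exists 3%N].
have [w [z [wk Kz ->]]] := attractor_coding k Kpq_attractor Ky.
by exists (d :: w), z; split => //; apply: words_cons.
Qed.

Lemma Apq_bounds a : Apq p q a -> 15/16 <= a <= 1.
Proof.
case/(Apq_coding 0) => w [z [_ w1 Kz ->]].
have z01 := Kpq_sub01 Kz.
have /andP[d0 _] := word_map_sub0 hp hq w z01.
have /andP[_ a1] := word_map01 hp hq w z01.
have w15 := word_map_head_ge hp hq w1.
by apply/andP; split; lra.
Qed.

Lemma Apq_compact : compact (Apq p q).
Proof.
have [_ [cK _]] := Kpq_attractor.
rewrite /Apq; case: (@S_digit_map R p q) => _ _ -> ->.
by apply: compactU; apply: continuous_compact => //;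
  apply: continuous_subspaceT; exact: digit_map_continuous.
Qed.

End Attractor.


Section Delta.
Variables (R : realType) (m n : nat) (p : R).
Hypothesis hp : 0 < p < 1/16.
Implicit Types (q v : R) (w : seq nat).

Lemma DeltaP q : Delta m n p q <-> 0 < q < 1/16 /\
  exists2 a, Apq p q a & exists2 b, Apq p q b & p ^+ m * a = q ^+ n * b.
Proof.
split=> [[hq [_ [[a Aa <-] [b Ab]]]]|[hq [a Aa [b Ab e]]]].
  by rewrite iter_S1 iter_S2 => eb; split=> //; exists a => //; exists b.
split=> //; exists (p ^+ m * a); split; first by exists a => //; rewrite iter_S1.
by exists b => //; rewrite iter_S2 e.
Qed.

Lemma Apq_approx q q' k a : 0 < q < 1/16 -> 0 < q' < 1/16 -> Apq p q a ->
  exists2 a', Apq p q' a' & `|a - a'| <= (1/16) ^+ k + 2 * `|q - q'|.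
Proof.
move=> hq hq' /(Apq_coding hp hq k)[w [z [wk w1 Kz ->]]].
have [[z' Kz'] _] := Kpq_attractor hp hq'.
exists (word_map p q' w z'); first exact (Apq_word hp hq' wk w1 Kz').
apply: le_trans (word_map_approx hp hq hq' w (Kpq_sub01 hp hq Kz) (Kpq_sub01 hp hq' Kz')) _.
by rewrite lerD2r (size_words wk) ler_wiXn2l //; lra.
Qed.

Lemma Delta_near q q0 k : Delta m n p q -> 0 < q0 < 1/16 -> exists a b,
  [/\ Apq p q0 a, Apq p q0 b &
    `|p ^+ m * a - q0 ^+ n * b| <= 2 * (1/16) ^+ k + (n%:R + 4) * `|q - q0|].
Proof.
move=> /DeltaP[hq [a Aa [b Ab eab]]] hq0.
have [a' Aa' aa'] := Apq_approx k hq hq0 Aa.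
have [b' Ab' bb'] := Apq_approx k hq hq0 Ab.
exists a', b'; split => //.
have -> : p ^+ m * a' - q0 ^+ n * b' =
    p ^+ m * (a' - a) + (q ^+ n - q0 ^+ n) * b + q0 ^+ n * (b - b').
  by rewrite !mulrBr eab; ring.
have /andP[pm0 pm1] := exprn_bounds hp m.
have /andP[qn0 qn1] := exprn_bounds hq0 n.
have /andP[b0 b1] := Apq_bounds hp hq Ab.
have qq0 := exprn_dist n (bounds01 hq) (bounds01 hq0).
apply: le_trans (ler_normD _ _) _; apply: le_trans (lerD (ler_normD _ _) (lexx _)) _.
rewrite !normrM (ger0_norm pm0) (ger0_norm qn0) (@ger0_norm _ b) ?(distrC a') //; last lra.
have := normr_ge0 (a - a'); have := normr_ge0 (b - b').
have := normr_ge0 (q ^+ n - q0 ^+ n); have := normr_ge0 (q - q0).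
nra.
Qed.

Lemma Delta_closed q0 : 0 < q0 < 1/16 -> closure (Delta m n p) q0 -> Delta m n p q0.
Proof.
move=> hq0 clq0.
pose f (ab : R * R) := p ^+ m * ab.1 - q0 ^+ n * ab.2.
have cD : compact (f @` (Apq p q0 `*` Apq p q0)).
  apply: continuous_compact; last exact: compact_setX (Apq_compact hp hq0) (Apq_compact hp hq0).
  apply: continuous_subspaceT => ab.
  by apply: cvgB; apply: cvgM; [exact: cvg_cst | exact: cvg_fst | exact: cvg_cst | exact: cvg_snd].
suff [[a b] [/= Aa Ab] /eqP] : (f @` (Apq p q0 `*` Apq p q0)) 0.
  by rewrite subr_eq0 => /eqP eab; apply/DeltaP; split => //; exists a => //; exists b.
apply: (compact_closed (@Rhausdorff R) cD) => B /nbhs_ballP[e /= e0 eB].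
have [k ke] : exists k, (1/16 : R) ^+ k < e / 4 by apply: exists_expr_lt; lra.
have n4 : 0 < n%:R + 4 :> R by have := ler0n R n; lra.
pose d := e / (2 * (n%:R + 4)).
have d0 : 0 < d by rewrite divr_gt0 // mulr_gt0.
have [q [Dq qq0]] := clq0 _ (nbhsx_ballx q0 _ d0).
have [a [b [Aa Ab ab]]] := Delta_near k Dq hq0.
exists (f (a, b)); split; first by exists (a, b).
apply: eB; rewrite /ball /= sub0r normrN; apply: le_lt_trans ab _.
have : (n%:R + 4) * `|q - q0| < e / 2.
  have -> : e / 2 = (n%:R + 4) * d by rewrite /d; field; rewrite gt_eqF.
  by rewrite distrC ltr_pM2l.
lra.
Qed.

Lemma Delta_exprn_ge q : Delta m n p q -> 15/16 * p ^+ m <= q ^+ n.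
Proof.
case/DeltaP => hq [a Aa [b Ab eab]].
have /andP[a15 _] := Apq_bounds hp hq Aa.
have /andP[_ b1] := Apq_bounds hp hq Ab.
have /andP[pm0 _] := exprn_bounds hp m.
have /andP[qn0 _] := exprn_bounds hq n.
nra.
Qed.

Definition coding_gap q w1 w2 : R :=
  q ^+ n * word_map p q w2 0 - p ^+ m * word_map p q w1 0.

Lemma Delta_coding_gap q v k : Delta m n p q -> q <= v -> v < 1/16 -> exists w1 w2,
  [/\ w1 \in words k.+1, w2 \in words k.+1, (1 < head 0%N w2)%N &
    `|coding_gap q w1 w2| <= p ^+ m * word_ratio p v w1 + v ^+ n * word_ratio p v w2].
Proof.
case/DeltaP => hq [a Aa [b Ab eab]] qv v16.
have hv : 0 < v < 1/16 by case/andP: hq => q0 _; rewrite v16 andbT; lra.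
have [w1 [z1 [w1k _ Kz1 az]]] := Apq_coding hp hq k Aa.
have [w2 [z2 [w2k w21 Kz2 bz]]] := Apq_coding hp hq k Ab.
exists w1, w2; split => //.
have /andP[a0 a1] := word_map_sub0 hp hq w1 (Kpq_sub01 hp hq Kz1).
have /andP[b0 b1] := word_map_sub0 hp hq w2 (Kpq_sub01 hp hq Kz2).
have /andP[pm0 _] := exprn_bounds hp m.
have /andP[qn0 _] := exprn_bounds hq n.
have qvn : q ^+ n <= v ^+ n.
  by case/andP: hq => q0 _; rewrite lerXn2r // nnegrE ltW // (lt_le_trans q0).
have -> : coding_gap q w1 w2 = p ^+ m * (a - word_map p q w1 0) -
    q ^+ n * (b - word_map p q w2 0) by rewrite /coding_gap !mulrBr eab; ring.
rewrite az bz; apply: le_trans (ler_normB _ _) _.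
rewrite !normrM !ger0_norm //; apply: lerD.
  by apply: ler_wpM2l => //; apply: le_trans a1 _; exact: word_ratio_le.
by apply: ler_pM => //; apply: le_trans b1 _; exact: word_ratio_le.
Qed.

Hypothesis hn : (0 < n)%N.

Lemma coding_gap_incr q1 q2 w1 w2 : 0 < q1 -> q1 <= q2 -> q2 < 1/16 ->
  15/16 * p ^+ m <= q1 ^+ n -> (1 < head 0%N w2)%N ->
  p ^+ m * (q2 - q1) <= coding_gap q2 w1 w2 - coding_gap q1 w1 w2.
Proof.
move=> q10 q12 q216 q1n w21.
have hq1 : 0 < q1 < 1/16 by rewrite q10; lra.
have hq2 : 0 < q2 < 1/16 by rewrite q216; lra.
have x01 : 0 <= (0 : R) <= 1 by rewrite lexx ler01.
have b2_ge := word_map_head_ge hp hq2 w21.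
have /andP[_ b2_le] := word_map01 hp hq2 w2 x01.
have dq : `|q2 - q1| = q2 - q1 by rewrite ger0_norm // subr_ge0.
have := word_map_dist hp hq2 hq1 w2 x01; have := word_map_dist hp hq2 hq1 w1 x01.
rewrite dq !ler_norml => /andP[_ a21] /andP[b21 _].
rewrite /coding_gap.
set a1 := word_map p q1 w1 0 in a21 *; set a2 := word_map p q2 w1 0 in a21 *.
set b1 := word_map p q1 w2 0 in b21 *; set b2 := word_map p q2 w2 0 in b2_ge b2_le b21 *.
have P0 : 0 < p ^+ m by rewrite exprn_gt0; case/andP: hp.
set P := p ^+ m in q1n P0 *.
case: n hn q1n => // k _ q1n.
have q2n := subrXX_ge k (ltW q10) q12.
have q1X : q1 ^+ k.+1 = q1 * q1 ^+ k by rewrite exprS.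
rewrite q1X in q1n q2n *; set X := q1 ^+ k in q1n q2n *.
have X0 : 0 <= X by exact: exprn_ge0 (ltW q10).
have dqX : 0 <= (q2 - q1) * X by rewrite mulr_ge0 // subr_ge0.
have s1 : (q2 - q1) * X * (15/16) <= (q2 ^+ k.+1 - q1 * X) * b2 by nra.
have s2 : - (2/16) * (q2 - q1) * X <= q1 * X * (b2 - b1) by nra.
have s3 : P * (a2 - a1) <= 2 * P * (q2 - q1) by nra.
have s4 : (q2 - q1) * (15 * P) <= (q2 - q1) * X by nra.
nra.
Qed.

Lemma Delta_interval_le u v k : u <= v -> (forall q, u <= q <= v -> Delta m n p q) ->
  v - u <= 2 / p ^+ m * (p ^+ m + v ^+ n) * (8 * p + 8 * v) ^+ k.+1.
Proof.
move=> uv uvD; have vv : u <= v <= v by rewrite uv lexx.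
have [hv _] := (DeltaP v).1 (uvD v vv); have /andP[v0 v16] := hv.
have P0 : 0 < p ^+ m by rewrite exprn_gt0; case/andP: hp.
pose eta (i : seq nat * seq nat) :=
  p ^+ m * word_ratio p v i.1 + v ^+ n * word_ratio p v i.2.
pose E i q := [/\ u <= q <= v, (1 < head 0%N i.2)%N & `|coding_gap q i.1 i.2| <= eta i].
rewrite -(mulrA (2 / p ^+ m)) -sum_allpairs_word_ratio big_distrr /=.
apply: (le_sum_diam_cover (E := E)) uv _ => [i|i x y|x xuv].
- have /andP[r1 _] := word_ratio_bounds hp hv i.1.
  have /andP[r2 _] := word_ratio_bounds hp hv i.2.
  have /andP[vn0 _] := exprn_bounds hv n.
  have pm0 := ltW P0.
  by rewrite mulr_ge0 ?divr_ge0 ?addr_ge0 ?mulr_ge0.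
- wlog xy : x y / x <= y.
    move=> hw Ex Ey; case: (leP x y) => [xy|/ltW yx]; first exact: hw.
    by rewrite distrC; apply: hw.
  move=> [/andP[ux xv] w21 gx] [/andP[uy yv] _ gy].
  have Dx : Delta m n p x by apply: uvD; rewrite ux xv.
  have [/andP[x0 _] _] := (DeltaP x).1 Dx.
  have incr := coding_gap_incr i.1 x0 xy (le_lt_trans yv v16) (Delta_exprn_ge Dx) w21.
  rewrite distrC ger0_norm ?subr_ge0 // mulrAC ler_pdivlMr // mulrC.
  apply: le_trans incr _; move: gx gy; rewrite /eta !ler_norml => /andP[? ?] /andP[? ?].
  lra.
- have /andP[_ xv] := xuv.
  have [w1 [w2 [w1k w2k w21 gx]]] := Delta_coding_gap k (uvD x xuv) xv v16.
  by exists (w1, w2); [exact: allpairs_f | split].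
Qed.

Lemma Delta_no_interval u v : u < v -> ~ (forall q, u <= q <= v -> Delta m n p q).
Proof.
move=> uv uvD; have vv : u <= v <= v by rewrite (ltW uv) lexx.
have [/andP[v0 v16] _] := (DeltaP v).1 (uvD v vv).
suff : v - u <= 0 by lra.
apply: (@le0_geometric_bound _ (8 * p + 8 * v) (2 / p ^+ m * (p ^+ m + v ^+ n))) => [|k].
  by case/andP: hp => p0 p16; apply/andP; split; lra.
exact: Delta_interval_le (ltW uv) uvD.
Qed.

Lemma closure_Delta_sub : closure (Delta m n p) `<=` [set q | 0 <= q <= 1/16].
Proof.
have sub : Delta m n p `<=` `[0, 1/16]%classic.
  by move=> q [/andP[q0 q16] _]; rewrite /= in_itv /= !ltW.
move=> q /(closureS sub); rewrite -(closure_id _).1; last exact: itv_closed.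
by rewrite /= in_itv.
Qed.

End Delta.

Theorem theorem17 (R : realType) (p : R) (hp : 0 < p < 1/16) (m n : nat)
  (hm : (0 < m)%N) (hn : (0 < n)%N) :
  (* closed in the subspace (0,1/16) *)
  closure (Delta m n p) `&` [set q : R | 0 < q < 1/16] = Delta m n p /\
  (* nowhere dense (in the open set (0,1/16), equivalently in R) *)
  interior (closure (Delta m n p)) = set0.
Proof.
split.
  apply/seteqP; split=> [q [clq hq]|q Dq]; first exact: Delta_closed.
  by split; [exact: subset_closure | case: Dq].
apply/seteqP; split=> // x /nbhs_ballP[e /= e0 eD].
have near_x q : x - e < q -> q < x + e -> closure (Delta m n p) q.
  by move=> q1 q2; apply: eD; rewrite /ball /= ltr_norml; apply/andP; split; lra.
have /andP[lo _] : 0 <= x - 3 * e / 4 <= 1/16.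
  by apply: closure_Delta_sub; apply: near_x; lra.
have /andP[_ hi] : 0 <= x + 3 * e / 4 <= 1/16.
  by apply: closure_Delta_sub; apply: near_x; lra.
apply: (Delta_no_interval hp hn (u := x - e / 2) (v := x + e / 2)); first lra.
move=> q /andP[q1 q2]; apply: Delta_closed => //; first by apply/andP; split; lra.
by apply: near_x; lra.
Qed.
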